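(* Let $\hat{\mathcal U}(\mathfrak L)$ (resp. $\hat{\mathcal U}(\mathfrak H)$) be the subgroup of $PSL(2,\mathfrak L)$ (resp. $PSL(2,\mathfrak H)$) consisting of the elements that fix the point $1\in\mathbf H^1_{\mathbb H}$. Then $\hat{\mathcal U}(\mathfrak L)$ is generated by $T$ and $\mathcal U(\mathfrak L)$, and $\hat{\mathcal U}(\mathfrak H)$ is generated by $T$ and $\mathcal U(\mathfrak H)$. Moreover $T$ commutes with every element of $\mathcal U(\mathfrak H)$, so that $\hat{\mathcal U}(\mathfrak L)\cong\mathbb Z/2\mathbb Z\oplus\mathcal U(\mathfrak L)$ and $\hat{\mathcal U}(\mathfrak H)\cong\mathbb Z/2\mathbb Z\oplus\mathcal U(\mathfrak H)$.
   Context: $\mathbb H$ is the real quaternions, $\mathbf H^1_{\mathbb H}=\{q\in\mathbb H:\Re q>0\}$. Quaternionic matrices act by $q\mapsto(aq+b)(cq+d)^{-1}$, modulo nonzero real scalars. $\Im\mathbb H(\mathbb Z)=\{b\mathbf i+c\mathbf j+d\mathbf k:b,c,d\in\mathbb Z\}$; $\tau_\omega(q)=q+\omega$; $T(q)=q^{-1}$ (matrix $\begin{pmatrix}0&1\\1&0\end{pmatrix}$). Lipschitz units: $\pm1,\pm\mathbf i,\pm\mathbf j,\pm\mathbf k$; Hurwitz units: these together with $\frac12(\pm1\pm\mathbf i\pm\mathbf j\pm\mathbf k)$. For a unit $u$, $D_u=\begin{pmatrix}u&0\\0&u\end{pmatrix}$ acts by $q\mapsto uqu^{-1}$. $\mathcal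 U(\mathfrak L)=\{D_u:u\text{ Lipschitz unit}\}\cong\mathbb Z/2\mathbb Z\oplus\mathbb Z/2\mathbb Z$ and $\mathcal U(\mathfrak H)=\{D_u:u\text{ Hurwitz unit}\}$ (order 12). $PSL(2,\mathfrak L)$ is generated by $T$ and the $\tau_\omega$, $\omega\in\Im\mathbb H(\mathbb Z)$; $PSL(2,\mathfrak H)$ is generated by $T$, the $\tau_\omega$ and $\mathcal U(\mathfrak H)$. *)

(* Real quaternions over an arbitrary real field R
   (the paper's setting is R = the reals; the statement is purely algebraic). *)
From HB Require Import structures.
From mathcomp Require Import all_boot all_order all_algebra.
Set Implicit Arguments. Unset Strict Implicit. Unset Printing Implicit Defensive.
Import Order.TTheory GRing.Theory Num.Theory.
Local Open Scope ring_scope.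

Section Quat.
Variable R : realFieldType.

Record quat := Quat { q0 : R; q1 : R; q2 : R; q3 : R }.

Definition qreal (r : R) : quat := Quat r 0 0 0.
Definition q_0 : quat := qreal 0.
Definition q_1 : quat := qreal 1.
Definition q_i : quat := Quat 0 1 0 0.
Definition q_j : quat := Quat 0 0 1 0.
Definition q_k : quat := Quat 0 0 0 1.

Definition qadd (a b : quat) : quat :=
  Quat (q0 a + q0 b) (q1 a + q1 b) (q2 a + q2 b) (q3 a + q3 b).
Definition qopp (a : quat) : quat := Quat (- q0 a) (- q1 a) (- q2 a) (- q3 a).

Definition qmul (a b : quat) : quat :=
  Quat (q0 a * q0 b - q1 a * q1 b - q2 a * q2 b - q3 a * q3 b)
       (q0 a * q1 b + q1 a * q0 b + q2 a * q3 b - q3 a * q2 b)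
       (q0 a * q2 b - q1 a * q3 b + q2 a * q0 b + q3 a * q1 b)
       (q0 a * q3 b + q1 a * q2 b - q2 a * q1 b + q3 a * q0 b).

Definition qnorm2 (a : quat) : R := q0 a ^+ 2 + q1 a ^+ 2 + q2 a ^+ 2 + q3 a ^+ 2.

(** q^{-1} = conj q / |q|^2 (and 0^{-1} = 0) *)
Definition qinv (a : quat) : quat :=
  let n := (qnorm2 a)^-1 in Quat (q0 a * n) (- q1 a * n) (- q2 a * n) (- q3 a * n).

Definition ImHZ (w : quat) : Prop :=
  exists b c d : int, w = Quat 0 b%:~R c%:~R d%:~R.

Definition lip_unit (u : quat) : Prop :=
  u = q_1 \/ u = qopp q_1 \/ u = q_i \/ u = qopp q_i \/
  u = q_j \/ u = qopp q_j \/ u = q_k \/ u = qopp q_k.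

Definition sgnh (b : bool) : R := if b then 2^-1 else - 2^-1.

Definition hur_unit (u : quat) : Prop :=
  lip_unit u \/ exists s0 s1 s2 s3 : bool, u = Quat (sgnh s0) (sgnh s1) (sgnh s2) (sgnh s3).

Record mat := Mat { ma : quat; mb : quat; mc : quat; md : quat }.

Definition mmul (M N : mat) : mat :=
  Mat (qadd (qmul (ma M) (ma N)) (qmul (mb M) (mc N)))
      (qadd (qmul (ma M) (mb N)) (qmul (mb M) (md N)))
      (qadd (qmul (mc M) (ma N)) (qmul (md M) (mc N)))
      (qadd (qmul (mc M) (mb N)) (qmul (md M) (md N))).

Definition mI : mat := Mat q_1 q_0 q_0 q_1.

Definition mscale (r : R) (M : mat) : mat :=
  Mat (qmul (qreal r) (ma M)) (qmul (qreal r) (mb M))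
      (qmul (qreal r) (mc M)) (qmul (qreal r) (md M)).

(** equality in PSL: equal modulo nonzero real scalars *)
Definition projeq (M N : mat) : Prop := exists r : R, r != 0 /\ M = mscale r N.

Definition mobius (M : mat) (q : quat) : quat :=
  qmul (qadd (qmul (ma M) q) (mb M)) (qinv (qadd (qmul (mc M) q) (md M))).

Definition fixes1 (M : mat) : Prop := mobius M q_1 = q_1.

Definition tau (w : quat) : mat := Mat q_1 w q_0 q_1.
Definition mT : mat := Mat q_0 q_1 q_1 q_0.
Definition mD (u : quat) : mat := Mat u q_0 q_0 u.

(** The subgroup (of matrices modulo real scalars) generated by a set S of
    matrices: contains the identity and S, closed under products, projective
    inverses, and under the identification modulo nonzero real scalars. *)
Inductive gen (S : mat -> Prop) : mat -> Prop :=
| gen_one : gen S mI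
| gen_base M : S M -> gen S M
| gen_mul M N : gen S M -> gen S N -> gen S (mmul M N)
| gen_inv M N : gen S M -> projeq (mmul M N) mI -> gen S N
| gen_proj M N : gen S M -> projeq M N -> gen S N.

Definition PSL_L : mat -> Prop :=
  gen (fun N => N = mT \/ exists w, ImHZ w /\ N = tau w).
Definition PSL_H : mat -> Prop :=
  gen (fun N => N = mT \/ (exists w, ImHZ w /\ N = tau w) \/
                (exists u, hur_unit u /\ N = mD u)).

Definition Uhat_L (M : mat) : Prop := PSL_L M /\ fixes1 M.
Definition Uhat_H (M : mat) : Prop := PSL_H M /\ fixes1 M.

Definition gen_TUL : mat -> Prop := gen (fun N => N = mT \/ exists u, lip_unit u /\ N = mD u).
Definition gen_TUH : mat -> Prop := gen (fun N => N = mT \/ exists u, hur_unit u /\ N = mD u).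

(** the map Z/2 (+) U -> \hat U, (e, D_u) |-> T^e D_u *)
Definition TD (e : bool) (u : quat) : mat := mmul (if e then mT else mI) (mD u).

(** (e, D_u) |-> T^e D_u is a group isomorphism Z/2 (+) U(X) -> \hat U(X),
    where U(X) = { D_u : unit u } is the group of classes of the D_u
    (group law D_u D_u' = D_{u u'}) : homomorphism, image = \hat U, trivial kernel. *)
Definition iso_Z2_plus (unit : quat -> Prop) (Uhat : mat -> Prop) : Prop :=
  (forall e u e' u', unit u -> unit u' ->
     projeq (mmul (TD e u) (TD e' u')) (TD (xorb e e') (qmul u u'))) /\
  (forall M, Uhat M <-> exists e u, unit u /\ projeq M (TD e u)) /\
  (forall e u, unit u -> projeq (TD e u) mI -> e = false /\ projeq (mD u) mI).

End Quat.

From Pilot Require Import Defs.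
From mathcomp Require Import all_boot all_order all_algebra ring lra zify.
Set Implicit Arguments. Unset Strict Implicit. Unset Printing Implicit Defensive.
Import Order.TTheory GRing.Theory Num.Theory.
Local Open Scope ring_scope.

(** Every generator of [PSL(2,L)] or [PSL(2,H)] is a real multiple of a matrix [N]
    with entries in the order such that [N^* T N = T = N T N^*], i.e. an isometry
    of the hermitian form with Gram matrix [T]; this property survives products,
    inverses and rescaling.  If such an [N = [[a, b], [c, d]]] fixes 1,
    then [a + b = c + d], and the isometry identities give [|a|^2 + |b|^2 = 1].
    Norms in the order are integers, so [a = 0] or [b = 0], which forces
    [N = T D_u] or [N = D_u] for a unit [u].  Conversely [T] fixes 1, and so does
    every [D_u]; for Lipschitz units [D_u] lies in [PSL(2,L)] because
    [(T tau_w)^3 = D_w] whenever [w^2 = -1].  Finally [T] commutes with every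
    [D_u], so the classes [T^e D_u] form [Z/2 (+) U]. *)

Section Stabiliser.
Variable R : realFieldType.
Local Notation quat := (quat R).
Local Notation mat := (mat R).
Local Notation q_0 := (q_0 R).
Local Notation q_1 := (q_1 R).
Local Notation mT := (mT R).
Local Notation mI := (mI R).

Definition qconj (a : quat) : quat := Quat (q0 a) (- q1 a) (- q2 a) (- q3 a).

Definition mstar (N : mat) : mat :=
  Mat (qconj (ma N)) (qconj (mc N)) (qconj (mb N)) (qconj (md N)).

Lemma quatP (a b : quat) :
  q0 a = q0 b -> q1 a = q1 b -> q2 a = q2 b -> q3 a = q3 b -> a = b.
Proof. by case: a; case: b => /= ? ? ? ? ? ? ? ? -> -> -> ->. Qed.

Lemma matP (M N : mat) :
  ma M = ma N -> mb M = mb N -> mc M = mc N -> md M = md N -> M = N.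
Proof. by case: M; case: N => /= ? ? ? ? ? ? ? ? -> -> -> ->. Qed.

Local Ltac qsimpl := rewrite ?/qnorm2;
  cbn [q0 q1 q2 q3 qmul qadd qopp qreal qconj Defs.q_1 Defs.q_0 q_i q_j q_k].
Local Ltac msimpl :=
  cbn [ma mb mc md mmul mscale mstar Defs.mT Defs.mI mD tau TD xorb].
Local Ltac quat_ring := apply: quatP; qsimpl; ring.
Local Ltac mat_ring := apply: matP; msimpl; quat_ring.

Lemma qmul1r (a : quat) : qmul q_1 a = a. Proof. quat_ring. Qed.
Lemma qmulr1 (a : quat) : qmul a q_1 = a. Proof. quat_ring. Qed.
Lemma qconjK (a : quat) : qconj (qconj a) = a. Proof. quat_ring. Qed.
Lemma qmul_conjl (a : quat) : qmul (qconj a) a = qreal (qnorm2 a). Proof. quat_ring. Qed.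
Lemma qnorm2M (a b : quat) : qnorm2 (qmul a b) = qnorm2 a * qnorm2 b.
Proof. rewrite /qnorm2 /=; ring. Qed.
Lemma qnorm2C (a : quat) : qnorm2 (qconj a) = qnorm2 a.
Proof. rewrite /qnorm2 /=; ring. Qed.
Lemma qnorm2_real (r : R) : qnorm2 (qreal r) = r ^+ 2.
Proof. rewrite /qnorm2 /=; ring. Qed.

Lemma qnorm2_ge0 (a : quat) : 0 <= qnorm2 a.
Proof. by rewrite /qnorm2 !addr_ge0 ?sqr_ge0. Qed.

Lemma qnorm2_eq0 (a : quat) : qnorm2 a = 0 -> a = q_0.
Proof.
rewrite /qnorm2 => a0.
have := sqr_ge0 (q0 a); have := sqr_ge0 (q1 a).
have := sqr_ge0 (q2 a); have := sqr_ge0 (q3 a) => ? ? ? ?.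
by apply: quatP => /=; apply/eqP; rewrite -sqrf_eq0; apply/eqP; lra.
Qed.

Lemma qmulV (a : quat) : qnorm2 a != 0 -> qmul a (qinv a) = q_1.
Proof.
rewrite /qnorm2 => a0; apply: quatP; cbn [qmul qinv q0 q1 q2 q3 Defs.q_1 qreal].
all: by rewrite /qnorm2; field.
Qed.

Lemma qmulVK (a b : quat) : qnorm2 b != 0 -> qmul (qmul a (qinv b)) b = a.
Proof.
rewrite /qnorm2 => b0; apply: quatP; cbn [qmul qinv q0 q1 q2 q3].
all: by rewrite /qnorm2; field.
Qed.

Lemma qreal_cancel (s : R) (a b : quat) :
  s != 0 -> qmul (qreal s) a = qmul (qreal s) b -> a = b.
Proof.
move=> s0 sab.
have K (x : quat) : qmul (qreal s^-1) (qmul (qreal s) x) = x.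
  by apply: quatP; qsimpl; field.
by rewrite -(K a) sab K.
Qed.

Lemma fixes1E (M : mat) :
  fixes1 M <-> qadd (ma M) (mb M) = qadd (mc M) (md M) /\
               qnorm2 (qadd (mc M) (md M)) != 0.
Proof.
rewrite /fixes1 /mobius !qmulr1; set x := qadd _ _; set y := qadd _ _.
split; last by case=> -> y0; rewrite qmulV.
move=> xy.
(* [qinv] of a zero quaternion is zero, so the quotient cannot be 1 then *)
have y0 : qnorm2 y != 0.
  apply/eqP=> y0; move: (congr1 (@q0 R) xy) => /=.
  by rewrite y0 invr0 !mulr0 !subr0 => /esym/eqP; rewrite oner_eq0.
by split=> //; rewrite -(qmulVK x y0) xy qmul1r.
Qed.

Lemma fixes1_scale (s : R) (N : mat) : s != 0 -> fixes1 (mscale s N) <-> fixes1 N.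
Proof.
move=> s0; rewrite !fixes1E /=.
have sD (x y : quat) :
  qadd (qmul (qreal s) x) (qmul (qreal s) y) = qmul (qreal s) (qadd x y) by quat_ring.
rewrite !sD qnorm2M qnorm2_real mulf_eq0 sqrf_eq0 (negbTE s0) /=.
by split=> [[/(qreal_cancel s0) -> ->] | [-> ->]].
Qed.

Lemma mmulA (A B C : mat) : mmul (mmul A B) C = mmul A (mmul B C). Proof. mat_ring. Qed.
Lemma mmul1l (A : mat) : mmul mI A = A. Proof. mat_ring. Qed.
Lemma mmul1r (A : mat) : mmul A mI = A. Proof. mat_ring. Qed.
Lemma mmul_scalel r (A B : mat) : mmul (mscale r A) B = mscale r (mmul A B).
Proof. mat_ring. Qed.
Lemma mmul_scaler r (A B : mat) : mmul A (mscale r B) = mscale r (mmul A B).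
Proof. mat_ring. Qed.
Lemma mscaleA r s (A : mat) : mscale r (mscale s A) = mscale (r * s) A. Proof. mat_ring. Qed.
Lemma mscale1 (A : mat) : mscale 1 A = A. Proof. mat_ring. Qed.
Lemma mstar_mul (A B : mat) : mstar (mmul A B) = mmul (mstar B) (mstar A). Proof. mat_ring. Qed.
Lemma mTTx (A : mat) : mmul mT (mmul mT A) = A. Proof. mat_ring. Qed.

Lemma mscaleK r (A : mat) : r != 0 -> mscale r^-1 (mscale r A) = A.
Proof. by move=> r0; rewrite mscaleA mulVf // mscale1. Qed.

Lemma projeq_refl (M : mat) : projeq M M.
Proof. by exists 1; rewrite oner_neq0 mscale1. Qed.

Lemma projeq_sym (M N : mat) : projeq M N -> projeq N M.
Proof. by case=> r [r0 ->]; exists r^-1; rewrite invr_eq0 mscaleK. Qed.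

Lemma projeq_mscale (r : R) (M : mat) : r != 0 -> projeq (mscale r M) M.
Proof. by exists r. Qed.

Lemma projeq_mul_invl (A X N : mat) (r s : R) : mmul A X = mI -> r != 0 ->
  mmul (mscale r X) N = mscale s mI -> N = mscale (s / r) A.
Proof.
move=> AX r0; rewrite mmul_scalel => XN.
have {}XN : mmul X N = mscale (s / r) mI.
  by rewrite -(mscaleK (mmul X N) r0) XN mscaleA mulrC.
by rewrite -[N]mmul1l -AX mmulA XN mmul_scaler mmul1r.
Qed.

(** Asking for both identities spares us proving that a one-sided inverse of a
    quaternionic matrix is two-sided. *)
Definition Tunitary (N : mat) : Prop :=
  mmul (mstar N) (mmul mT N) = mT /\ mmul N (mmul mT (mstar N)) = mT.

Definition mTinv (N : mat) : mat := mmul mT (mmul (mstar N) mT).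

Lemma mTinvE (a b c d : quat) :
  mTinv (Mat a b c d) = Mat (qconj d) (qconj b) (qconj c) (qconj a).
Proof. rewrite /mTinv; mat_ring. Qed.

Lemma mTinvK (N : mat) : Tunitary N -> mmul (mTinv N) N = mI.
Proof. by case=> h1 _; rewrite /mTinv !mmulA h1 -[mI]mTTx mmul1r. Qed.

Lemma TunitaryX (N : mat) : Tunitary N ->
  (forall X, mmul (mstar N) (mmul mT (mmul N X)) = mmul mT X) /\
  (forall X, mmul N (mmul mT (mmul (mstar N) X)) = mmul mT X).
Proof. by case=> h1 h2; split=> X; [rewrite -{2}h1 | rewrite -{2}h2]; rewrite !mmulA. Qed.

Lemma Tunitary_mul (N N' : mat) : Tunitary N -> Tunitary N' -> Tunitary (mmul N N').
Proof.
move=> [h1 h2] [h1' h2'].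
have [h1X _] := TunitaryX (conj h1 h2); have [_ h2X'] := TunitaryX (conj h1' h2').
by split; rewrite mstar_mul !mmulA ?h1X ?h2X'.
Qed.

Lemma Tunitary_mTinv (N : mat) : Tunitary N -> Tunitary (mTinv N).
Proof.
move=> /TunitaryX [h1 h2].
rewrite /Tunitary; have -> : mstar (mTinv N) = mmul mT (mmul N mT) by rewrite /mTinv; mat_ring.
by split; rewrite /mTinv !mmulA !mTTx ?h1 ?h2 mTTx.
Qed.

(** * [T]-unitary matrices fixing 1 *)

Lemma Tunitary_fixes1_norm (a b c d : quat) :
  Tunitary (Mat a b c d) -> qadd a b = qadd c d -> qnorm2 a + qnorm2 b = 1.
Proof.
move=> [h1 h2] abcd; have dE : d = qadd (qadd a b) (qopp c) by rewrite abcd; quat_ring.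
rewrite {}dE in h1 h2.
have := congr1 (fun M => q0 (ma M)) h1; have := congr1 (fun M => q0 (mb M)) h1.
have := congr1 (fun M => q0 (md M)) h1; have := congr1 (fun M => q0 (ma M)) h2.
by msimpl; qsimpl; lra.
Qed.

Lemma Tunitary_fixes1_a0 (b c d : quat) : Tunitary (Mat q_0 b c d) ->
  qadd q_0 b = qadd c d -> qnorm2 b = 1 -> Mat q_0 b c d = TD true b.
Proof.
move=> [h1 _] bcd b1.
have cb : qmul (qconj c) b = q_1 by rewrite -[q_1](congr1 (@mb R) h1); msimpl; quat_ring.
have cE : c = b.
  have : qmul (qmul (qconj c) b) (qconj b) = qmul (qconj c) (qreal (qnorm2 b)) by quat_ring.
  rewrite cb b1 qmul1r => cbE.
  by rewrite -[c]qconjK -[b]qconjK cbE; quat_ring.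
have dE : d = qadd (qadd q_0 b) (qopp c) by rewrite bcd; quat_ring.
by rewrite dE cE; mat_ring.
Qed.

Lemma Tunitary_fixes1_b0 (a c d : quat) : Tunitary (Mat a q_0 c d) ->
  qadd a q_0 = qadd c d -> qnorm2 a = 1 -> Mat a q_0 c d = TD false a.
Proof.
move=> [h1 _] acd a1.
have ad : qmul (qconj a) d = q_1 by rewrite -[q_1](congr1 (@mb R) h1); msimpl; quat_ring.
have dE : d = a.
  have : qmul a (qmul (qconj a) d) = qmul (qreal (qnorm2 a)) d by quat_ring.
  by rewrite ad a1 qmulr1 => ->; quat_ring.
have cE : c = qadd (qadd a q_0) (qopp d) by rewrite acd; quat_ring.
by rewrite cE dE; mat_ring.
Qed.

(** * Matrices over a subring *)

Record conj_subring (P : quat -> Prop) : Prop := ConjSubring {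
  subring0 : P q_0;
  subring1 : P q_1;
  subringD : forall a b, P a -> P b -> P (qadd a b);
  subringM : forall a b, P a -> P b -> P (qmul a b);
  subringC : forall a, P a -> P (qconj a) }.

Definition mat_over (P : quat -> Prop) (N : mat) : Prop :=
  P (ma N) /\ P (mb N) /\ P (mc N) /\ P (md N).

Definition Tunitary_over (P : quat -> Prop) (M : mat) : Prop :=
  exists s N, s != 0 /\ mat_over P N /\ Tunitary N /\ M = mscale s N.

Section Subring.
Variable P : quat -> Prop.
Hypothesis P_subring : conj_subring P.

Lemma mat_over_mul (N N' : mat) : mat_over P N -> mat_over P N' -> mat_over P (mmul N N').
Proof.
case: P_subring => _ _ PD PM _.
by move=> [? [? [? ?]]] [? [? [? ?]]]; do ![split | apply: PD | apply: PM].
Qed.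

Lemma mat_over_mTinv (N : mat) : mat_over P N -> mat_over P (mTinv N).
Proof.
case: N => a b c d [? [? [? ?]]]; rewrite mTinvE.
by do ![split | apply: (subringC P_subring)].
Qed.

Lemma Tunitary_over_Tunitary (N : mat) : mat_over P N -> Tunitary N -> Tunitary_over P N.
Proof. by move=> PN uN; exists 1, N; rewrite oner_neq0 mscale1. Qed.

Lemma Tunitary_over_gen (S : mat -> Prop) :
  (forall M, S M -> Tunitary_over P M) -> forall M, gen S M -> Tunitary_over P M.
Proof.
move=> SP M; elim=> {M} [| // | M M' _ [s [N [s0 [PN [uN ->]]]]] _ [s' [N' [s0' [PN' [uN' ->]]]]]
  | M M' _ [s [N [s0 [PN [uN ->]]]]] [t [t0 MM']]
  | M M' _ [s [N [s0 [PN [uN ->]]]]] [t [t0 NM']]].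
- apply: Tunitary_over_Tunitary; first by rewrite /mat_over /=; case: P_subring.
  by split; mat_ring.
- exists (s * s'), (mmul N N'); split; first exact: mulf_neq0.
  split; first exact: mat_over_mul.
  split; first exact: Tunitary_mul.
  by rewrite mmul_scalel mmul_scaler mscaleA.
- exists (t / s), (mTinv N); split; first by rewrite mulf_neq0 ?invr_eq0.
  split; first exact: mat_over_mTinv.
  split; first exact: Tunitary_mTinv.
  exact: (projeq_mul_invl (mTinvK uN) s0 MM').
- exists (t^-1 * s), N; split; first by rewrite mulf_neq0 ?invr_eq0.
  by do 2 split=> //; rewrite -mscaleA NM' mscaleK.
Qed.

Lemma Tunitary_over_mT : Tunitary_over P mT.
Proof.
apply: Tunitary_over_Tunitary; first by rewrite /mat_over /=; case: P_subring.
by split; mat_ring.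
Qed.

Lemma Tunitary_over_tau (w : quat) : P w -> q0 w = 0 -> Tunitary_over P (tau w).
Proof.
move=> Pw w0; apply: Tunitary_over_Tunitary; first by rewrite /mat_over /=; case: P_subring.
by case: w w0 {Pw} => w0 w1 w2 w3 /= ->; split; mat_ring.
Qed.

Lemma Tunitary_over_mD (u : quat) : P u -> qnorm2 u = 1 -> Tunitary_over P (mD u).
Proof.
move=> Pu u1; apply: Tunitary_over_Tunitary; first by rewrite /mat_over /=; case: P_subring.
have uTu : mmul (mstar (mD u)) (mmul mT (mD u)) = mscale (qnorm2 u) mT by mat_ring.
have uTu' : mmul (mD u) (mmul mT (mstar (mD u))) = mscale (qnorm2 u) mT by mat_ring.
by split; rewrite ?uTu ?uTu' u1 mscale1.
Qed.

Variable U : quat -> Prop.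
Hypothesis unitE : forall u, U u <-> P u /\ qnorm2 u = 1.
Hypothesis P_norm_int : forall a, P a -> exists n : int, qnorm2 a = n%:~R.

Lemma unit1 : U q_1.
Proof. by apply/unitE; split; [case: P_subring | rewrite /qnorm2 /=; ring]. Qed.

Lemma unit_norm (u : quat) : U u -> qnorm2 u = 1.
Proof. by case/unitE. Qed.

Lemma unitM (u v : quat) : U u -> U v -> U (qmul u v).
Proof.
move=> /unitE [Pu Nu] /unitE [Pv Nv]; apply/unitE.
by rewrite qnorm2M Nu Nv mulr1; split; first exact: (subringM P_subring).
Qed.

Lemma unitC (u : quat) : U u -> U (qconj u).
Proof.
by move=> /unitE [Pu Nu]; apply/unitE; rewrite qnorm2C; split; first exact: (subringC P_subring).
Qed.

Definition TDclass (M : mat) : Prop := exists e u, U u /\ projeq M (TD e u).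

Lemma TD_mul e e' (u u' : quat) : mmul (TD e u) (TD e' u') = TD (xorb e e') (qmul u u').
Proof. by case: e; case: e'; mat_ring. Qed.

Lemma TD_true1 : TD true q_1 = mT. Proof. mat_ring. Qed.
Lemma TD_false1 : TD false q_1 = mI. Proof. mat_ring. Qed.
Lemma TD_falseE (u : quat) : TD false u = mD u. Proof. mat_ring. Qed.

Lemma TDclass_TD e (u : quat) : U u -> TDclass (TD e u).
Proof. by move=> Uu; exists e, u; split; last exact: projeq_refl. Qed.

Lemma TDclass_gen (M : mat) :
  gen (fun N => N = mT \/ exists u, U u /\ N = mD u) M -> TDclass M.
Proof.
elim=> {M} [| N [-> | [u [Uu ->]]]
  | M M' _ [e [u [Uu [r [r0 ->]]]]] _ [e' [u' [Uu' [r' [r0' ->]]]]]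
  | M M' _ [e [u [Uu [r [r0 ->]]]]] [t [t0 MM']]
  | M M' _ [e [u [Uu [r [r0 ->]]]]] [t [t0 MM']]].
- by rewrite -TD_false1; apply: TDclass_TD; exact: unit1.
- by rewrite -TD_true1; apply: TDclass_TD; exact: unit1.
- by rewrite -TD_falseE; exact: TDclass_TD.
- exists (xorb e e'), (qmul u u'); split; first exact: unitM.
  exists (r * r'); split; first exact: mulf_neq0.
  by rewrite mmul_scalel mmul_scaler mscaleA TD_mul.
- exists e, (qconj u); split; first exact: unitC.
  exists (t / r); split; first by rewrite mulf_neq0 ?invr_eq0.
  apply: (projeq_mul_invl _ r0 MM').
  by rewrite TD_mul Bool.xorb_nilpotent qmul_conjl unit_norm // TD_false1.
- exists e, u; split=> //; exists (t^-1 * r); split; first by rewrite mulf_neq0 ?invr_eq0.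
  by rewrite -mscaleA MM' mscaleK.
Qed.

Lemma gen_TDclass (S : mat -> Prop) (M : mat) :
  gen S mT -> (forall u, U u -> gen S (mD u)) -> TDclass M -> gen S M.
Proof.
move=> ST SD [e [u [Uu /projeq_sym MTD]]]; apply: gen_proj MTD.
by case: e; apply: gen_mul; [| exact: SD | exact: gen_one | exact: SD].
Qed.

Lemma TDclass_fixes1 (M : mat) : TDclass M -> fixes1 M.
Proof.
move=> [e [u [Uu [r [r0 ->]]]]]; rewrite fixes1_scale // fixes1E.
have -> : qadd (mc (TD e u)) (md (TD e u)) = u by case: e; msimpl; quat_ring.
by rewrite unit_norm // oner_neq0; split; first by case: e; msimpl; quat_ring.
Qed.

Lemma norm_int_split (a b : quat) : P a -> P b -> qnorm2 a + qnorm2 b = 1 ->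
  (a = q_0 /\ qnorm2 b = 1) \/ (b = q_0 /\ qnorm2 a = 1).
Proof.
move=> /P_norm_int [n na] /P_norm_int [m mb] abn.
have n0 : (0 <= n)%R by rewrite -(ler0z R) -na qnorm2_ge0.
have m0 : (0 <= m)%R by rewrite -(ler0z R) -mb qnorm2_ge0.
have nm1 : (n + m = 1)%R by apply/eqP; rewrite -(eqr_int R) intrD -na -mb abn.
have [[n_0 m1] | [n1 m_0]] : (n = 0 /\ m = 1 \/ n = 1 /\ m = 0)%R by lia.
- by left; split; [apply: qnorm2_eq0; rewrite na n_0 | rewrite mb m1].
- by right; split; [apply: qnorm2_eq0; rewrite mb m_0 | rewrite na n1].
Qed.

Lemma Tunitary_fixes1_TD (N : mat) : mat_over P N -> Tunitary N -> fixes1 N ->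
  exists e u, U u /\ N = TD e u.
Proof.
case: N => a b c d; rewrite /mat_over /= => -[Pa [Pb _]] uN /fixes1E [/= abcd _].
have [[a0 b1] | [b0 a1]] := norm_int_split Pa Pb (Tunitary_fixes1_norm uN abcd).
- exists true, b; split; first exact/unitE.
  by rewrite a0 in uN abcd *; exact: Tunitary_fixes1_a0.
- exists false, a; split; first exact/unitE.
  by rewrite b0 in uN abcd *; exact: Tunitary_fixes1_b0.
Qed.

Lemma stabiliser_TDclass (M : mat) : Tunitary_over P M -> fixes1 M -> TDclass M.
Proof.
move=> [s [N [s0 [PN [uN ->]]]]] /(fixes1_scale _ s0) /(Tunitary_fixes1_TD PN uN).
by move=> [e [u [Uu ->]]]; exists e, u; split; last exact: projeq_mscale.
Qed.

Lemma stabiliserE (S : mat -> Prop) :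
  (forall N, S N -> Tunitary_over P N) -> gen S mT -> (forall u, U u -> gen S (mD u)) ->
  forall M, gen S M /\ fixes1 M <-> TDclass M.
Proof.
move=> SP ST SD M; split; first by case=> /(Tunitary_over_gen SP); exact: stabiliser_TDclass.
by move=> MTD; split; [exact: gen_TDclass | exact: TDclass_fixes1].
Qed.

Lemma iso_Z2_plus_TDclass (Uhat : mat -> Prop) :
  (forall M, Uhat M <-> TDclass M) -> iso_Z2_plus U Uhat.
Proof.
move=> UhatE; split; first by move=> e u e' u' _ _; rewrite TD_mul; exact: projeq_refl.
split; first by move=> M; rewrite UhatE.
move=> [] u _ [r [r0 TDr]].
- (* the top-left entry of [T D_u] is zero, that of [r I] is not *)
  have := congr1 (fun M => q0 (ma M)) TDr; msimpl; qsimpl.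
  move=> E; have r_0 : r = 0 by lra.
  by rewrite r_0 eqxx in r0.
- by split=> //; exists r; rewrite -TD_falseE.
Qed.

Lemma gen_TD_TDclass (M : mat) :
  gen (fun N => N = mT \/ exists u, U u /\ N = mD u) M <-> TDclass M.
Proof.
split; first exact: TDclass_gen.
by apply: gen_TDclass => [|u Uu]; apply: gen_base; [left | right; exists u].
Qed.

End Subring.

Lemma Ttau_cube (w : quat) : qmul w w = qopp q_1 ->
  mmul (mmul mT (tau w)) (mmul (mmul mT (tau w)) (mmul mT (tau w))) = mD w.
Proof.
move=> ww.
have -> : mmul (mmul mT (tau w)) (mmul (mmul mT (tau w)) (mmul mT (tau w))) =
  Mat w (qadd q_1 (qmul w w)) (qadd q_1 (qmul w w)) (qadd (qadd w w) (qmul w (qmul w w))).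
  by mat_ring.
by rewrite ww; mat_ring.
Qed.

(** * The Lipschitz and Hurwitz orders *)

Definition lipZ (x : quat) : Prop :=
  exists z0 z1 z2 z3 : int, x = Quat z0%:~R z1%:~R z2%:~R z3%:~R.

(** Coordinates in the basis [(1 + i + j + k)/2, i, j, k] of the Hurwitz order. *)
Definition hurwitz (m0 m1 m2 m3 : int) : quat :=
  Quat (m0%:~R / 2) (m0%:~R / 2 + m1%:~R) (m0%:~R / 2 + m2%:~R) (m0%:~R / 2 + m3%:~R).

Definition hurZ (x : quat) : Prop := exists m0 m1 m2 m3 : int, x = hurwitz m0 m1 m2 m3.

Local Ltac quat_field := apply: quatP; rewrite /hurwitz; qsimpl; field.

Lemma lipZ_subring : conj_subring lipZ.
Proof.
split.
- by exists 0, 0, 0, 0; quat_ring.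
- by exists 1, 0, 0, 0; quat_ring.
- move=> _ _ [z0 [z1 [z2 [z3 ->]]]] [w0 [w1 [w2 [w3 ->]]]].
  by exists (z0 + w0), (z1 + w1), (z2 + w2), (z3 + w3); quat_ring.
- move=> _ _ [z0 [z1 [z2 [z3 ->]]]] [w0 [w1 [w2 [w3 ->]]]].
  exists (z0 * w0 - z1 * w1 - z2 * w2 - z3 * w3), (z0 * w1 + z1 * w0 + z2 * w3 - z3 * w2),
    (z0 * w2 - z1 * w3 + z2 * w0 + z3 * w1), (z0 * w3 + z1 * w2 - z2 * w1 + z3 * w0).
  by quat_ring.
- by move=> _ [z0 [z1 [z2 [z3 ->]]]]; exists z0, (- z1), (- z2), (- z3); quat_ring.
Qed.

Lemma hurZ_subring : conj_subring hurZ.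
Proof.
split.
- by exists 0, 0, 0, 0; quat_field.
- by exists 2, (-1), (-1), (-1); quat_field.
- move=> _ _ [m0 [m1 [m2 [m3 ->]]]] [n0 [n1 [n2 [n3 ->]]]].
  by exists (m0 + n0), (m1 + n1), (m2 + n2), (m3 + n3); quat_field.
- move=> _ _ [m0 [m1 [m2 [m3 ->]]]] [n0 [n1 [n2 [n3 ->]]]].
  exists (- m0 * n0 - m0 * n1 - m0 * n2 - m0 * n3 - m1 * n0 - 2 * m1 * n1
          - m2 * n0 - 2 * m2 * n2 - m3 * n0 - 2 * m3 * n3),
    (m0 * n0 + m0 * n1 + m0 * n3 + m1 * n0 + m1 * n1 + m2 * n0 + m2 * n2 + m2 * n3
     - m3 * n2 + m3 * n3),
    (m0 * n0 + m0 * n1 + m0 * n2 + m1 * n1 - m1 * n3 + m2 * n0 + m2 * n2 + m3 * n0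
     + m3 * n1 + m3 * n3),
    (m0 * n0 + m0 * n2 + m0 * n3 + m1 * n0 + m1 * n1 + m1 * n2 - m2 * n1 + m2 * n2
     + m3 * n0 + m3 * n3).
  by quat_field.
- move=> _ [m0 [m1 [m2 [m3 ->]]]].
  by exists m0, (- m0 - m1), (- m0 - m2), (- m0 - m3); quat_field.
Qed.

Lemma lipZ_hurZ (x : quat) : lipZ x -> hurZ x.
Proof.
move=> [z0 [z1 [z2 [z3 ->]]]].
by exists (2 * z0), (z1 - z0), (z2 - z0), (z3 - z0); quat_field.
Qed.

Lemma ImHZ_lipZ (w : quat) : ImHZ w -> lipZ w.
Proof. by move=> [b [c [d ->]]]; exists 0, b, c, d; quat_ring. Qed.

Lemma qnorm2_lip (z0 z1 z2 z3 : int) :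
  qnorm2 (Quat (z0%:~R : R) z1%:~R z2%:~R z3%:~R) = (z0 * z0 + z1 * z1 + z2 * z2 + z3 * z3)%:~R.
Proof. by rewrite /qnorm2 /=; ring. Qed.

Lemma qnorm2_hurwitz (m0 m1 m2 m3 : int) : qnorm2 (hurwitz m0 m1 m2 m3) =
  (m0 * m0 + m0 * (m1 + m2 + m3) + m1 * m1 + m2 * m2 + m3 * m3)%:~R.
Proof. by rewrite /qnorm2 /hurwitz /=; field. Qed.

Lemma lipZ_norm_int (x : quat) : lipZ x -> exists n : int, qnorm2 x = n%:~R.
Proof. by move=> [z0 [z1 [z2 [z3 ->]]]]; rewrite qnorm2_lip; eexists. Qed.

Lemma hurZ_norm_int (x : quat) : hurZ x -> exists n : int, qnorm2 x = n%:~R.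
Proof. by move=> [m0 [m1 [m2 [m3 ->]]]]; rewrite qnorm2_hurwitz; eexists. Qed.

Lemma intr_eq1 (n : int) : (n%:~R : R) = 1 -> n = 1.
Proof. by move=> n1; apply/eqP; rewrite -(eqr_int R) n1. Qed.

Lemma lip_unit_int (z0 z1 z2 z3 : int) : (z0 * z0 + z1 * z1 + z2 * z2 + z3 * z3 = 1)%R ->
  lip_unit (Quat (z0%:~R : R) z1%:~R z2%:~R z3%:~R).
Proof.
move=> z1234.
have range (z : int) : (z * z <= 1 -> z = 0 \/ z = 1 \/ z = -1)%R by nia.
have := range z0 ltac:(nia); have := range z1 ltac:(nia).
have := range z2 ltac:(nia); have := range z3 ltac:(nia).
(* 81 sign patterns: discard those of the wrong norm, match the others with a unit *)
move=> [?|[?|?]] [?|[?|?]] [?|[?|?]] [?|[?|?]]; subst; rewrite /lip_unit;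
  try (exfalso; lia); repeat (first [left; solve [quat_ring] | right]); quat_ring.
Qed.

Lemma lip_unitE (u : quat) : lip_unit u <-> lipZ u /\ qnorm2 u = 1.
Proof.
split.
- move=> [->|[->|[->|[->|[->|[->|[->|->]]]]]]]; (split; last by rewrite /qnorm2 /=; ring).
  + by exists 1, 0, 0, 0; quat_ring.
  + by exists (-1), 0, 0, 0; quat_ring.
  + by exists 0, 1, 0, 0; quat_ring.
  + by exists 0, (-1), 0, 0; quat_ring.
  + by exists 0, 0, 1, 0; quat_ring.
  + by exists 0, 0, (-1), 0; quat_ring.
  + by exists 0, 0, 0, 1; quat_ring.
  + by exists 0, 0, 0, (-1); quat_ring.
- by move=> [[z0 [z1 [z2 [z3 ->]]]]]; rewrite qnorm2_lip => /intr_eq1; exact: lip_unit_int.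
Qed.

Lemma sgnh_int (t : int) : (t * t + t = 0)%R -> exists s, (2 * t + 1)%:~R / 2 = sgnh R s.
Proof.
move=> tt; have [->|->] : (t = 0 \/ t = -1)%R by nia.
- by exists true; rewrite /sgnh; field.
- by exists false; rewrite /sgnh; field.
Qed.

Lemma hur_unit_half (t0 t1 t2 t3 : int) :
  (t0 * t0 + t0 + (t1 * t1 + t1) + (t2 * t2 + t2) + (t3 * t3 + t3) = 0)%R ->
  hur_unit (Quat ((2 * t0 + 1)%:~R / 2 : R) ((2 * t1 + 1)%:~R / 2)
                 ((2 * t2 + 1)%:~R / 2) ((2 * t3 + 1)%:~R / 2)).
Proof.
move=> t0123.
(* each [t * t + t] is a nonnegative integer, so all four vanish *)
have ge0 (t : int) : (0 <= t * t + t)%R by case: (lerP 0 t) => ?; nia.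
have := ge0 t0; have := ge0 t1; have := ge0 t2; have := ge0 t3 => ? ? ? ?.
have [s0 ->] := @sgnh_int t0 ltac:(lia); have [s1 ->] := @sgnh_int t1 ltac:(lia).
have [s2 ->] := @sgnh_int t2 ltac:(lia); have [s3 ->] := @sgnh_int t3 ltac:(lia).
by right; exists s0, s1, s2, s3.
Qed.

Lemma hur_unitE (u : quat) : hur_unit u <-> hurZ u /\ qnorm2 u = 1.
Proof.
split.
- case=> [/lip_unitE [lu u1] | [s0 [s1 [s2 [s3 ->]]]]]; first by split=> //; exact: lipZ_hurZ.
  have sgnh_sqr s : sgnh R s ^+ 2 = 4^-1 by case: s; rewrite /sgnh; field.
  split; last by rewrite /qnorm2 /= !sgnh_sqr; field.
  pose b s : int := if s then 1 else 0.
  have sgnhE s : sgnh R s = (2 * b s - 1)%:~R / 2 by case: s; rewrite /sgnh /b; field.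
  exists (2 * b s0 - 1), (b s1 - b s0), (b s2 - b s0), (b s3 - b s0).
  by apply: quatP; rewrite /hurwitz /= !sgnhE; field.
- move=> [[m0 [m1 [m2 [m3 ->]]]]]; rewrite qnorm2_hurwitz => /intr_eq1 m1234.
  have [k [m0E | m0E]] : exists k, (m0 = 2 * k \/ m0 = 2 * k + 1)%R.
    by exists (m0 %/ 2)%Z; lia.
  + left; have -> : hurwitz m0 m1 m2 m3 = Quat k%:~R (k + m1)%:~R (k + m2)%:~R (k + m3)%:~R.
      by rewrite m0E; quat_field.
    by apply: lip_unit_int; nia.
  + have -> : hurwitz m0 m1 m2 m3 = Quat ((2 * k + 1)%:~R / 2) ((2 * (k + m1) + 1)%:~R / 2)
                                       ((2 * (k + m2) + 1)%:~R / 2) ((2 * (k + m3) + 1)%:~R / 2).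
      by rewrite m0E; quat_field.
    by apply: hur_unit_half; nia.
Qed.

Lemma lip_unit_PSL_L (u : quat) : lip_unit u -> PSL_L (mD u).
Proof.
have Dopp (v : quat) : PSL_L (mD v) -> PSL_L (mD (qopp v)).
  move=> Dv; apply: (gen_proj Dv); exists (-1).
  by split; [rewrite oppr_eq0 oner_eq0 | mat_ring].
have D1 : PSL_L (mD q_1).
  by apply: (gen_proj (gen_one _)); exists 1; split; [exact: oner_neq0 | mat_ring].
have Dimag (w : quat) : ImHZ w -> qmul w w = qopp q_1 -> PSL_L (mD w).
  move=> Hw ww; rewrite -(Ttau_cube ww).
  have Tw : PSL_L (mmul mT (tau w)).
    by apply: gen_mul; apply: gen_base; [left | right; exists w].
  by apply: gen_mul => //; apply: gen_mul.
have Di : PSL_L (mD (q_i R)) by apply: Dimag; [exists 1, 0, 0 |]; quat_ring.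
have Dj : PSL_L (mD (q_j R)) by apply: Dimag; [exists 0, 1, 0 |]; quat_ring.
have Dk : PSL_L (mD (q_k R)) by apply: Dimag; [exists 0, 0, 1 |]; quat_ring.
move=> [->|[->|[->|[->|[->|[->|[->|->]]]]]]];
  by [exact: D1 | exact: Dopp D1 | exact: Di | exact: Dopp Di | exact: Dj | exact: Dopp Dj
     | exact: Dk | exact: Dopp Dk].
Qed.

Lemma PSL_L_Tunitary_over (N : mat) :
  N = mT \/ (exists w, ImHZ w /\ N = tau w) -> Tunitary_over lipZ N.
Proof.
case=> [-> | [w [Hw ->]]]; first exact: (Tunitary_over_mT lipZ_subring).
by apply: (Tunitary_over_tau lipZ_subring); [exact: ImHZ_lipZ | case: Hw => b [c [d ->]]].
Qed.

Lemma PSL_H_Tunitary_over (N : mat) :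
  N = mT \/ (exists w, ImHZ w /\ N = tau w) \/ (exists u, hur_unit u /\ N = mD u) ->
  Tunitary_over hurZ N.
Proof.
case=> [-> | [[w [Hw ->]] | [u [/hur_unitE [Pu u1] ->]]]].
- exact: (Tunitary_over_mT hurZ_subring).
- apply: (Tunitary_over_tau hurZ_subring); first by apply/lipZ_hurZ/ImHZ_lipZ.
  by case: Hw => b [c [d ->]].
- exact: (Tunitary_over_mD hurZ_subring).
Qed.

Lemma mT_mD_comm (u : quat) : mmul mT (mD u) = mmul (mD u) mT.
Proof. mat_ring. Qed.

End Stabiliser.

Theorem mainTheorem5 (R : realFieldType) :
  (forall M : mat R, Uhat_L M <-> gen_TUL M) /\
  (forall M : mat R, Uhat_H M <-> gen_TUH M) /\
  (forall u : quat R, hur_unit u -> mmul (mT R) (mD u) = mmul (mD u) (mT R)) /\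
  iso_Z2_plus (@lip_unit R) (@Uhat_L R) /\
  iso_Z2_plus (@hur_unit R) (@Uhat_H R).
Proof.
have UhatL M : Uhat_L M <-> TDclass (@lip_unit R) M.
  apply: (stabiliserE (lipZ_subring R) (@lip_unitE R) (@lipZ_norm_int R)).
  - exact: PSL_L_Tunitary_over.
  - by apply: gen_base; left.
  - exact: lip_unit_PSL_L.
have UhatH M : Uhat_H M <-> TDclass (@hur_unit R) M.
  apply: (stabiliserE (hurZ_subring R) (@hur_unitE R) (@hurZ_norm_int R)).
  - exact: PSL_H_Tunitary_over.
  - by apply: gen_base; left.
  - by move=> u Hu; apply: gen_base; right; right; exists u.
split; first by move=> M; rewrite UhatL /gen_TUL (gen_TD_TDclass (lipZ_subring R) (@lip_unitE R)).
split; first by move=> M; rewrite UhatH /gen_TUH (gen_TD_TDclass (hurZ_subring R) (@hur_unitE R)).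
split; first by move=> u _; exact: mT_mD_comm.
by split; apply: iso_Z2_plus_TDclass; [exact: UhatL | exact: UhatH].
Qed.
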